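(* Let $N$ be the six-dimensional connected, simply connected nilpotent Lie group with Lie algebra $\mathfrak n$ described in the context, and consider the co-adjoint action of $N$ on $\mathfrak n^*$, $\ell\mapsto \ell\circ \mathrm{Ad}(n^{-1})$. Each co-adjoint orbit of $N$ contains exactly one element $\ell=(\omega,\lambda)$, $\lambda=(\lambda_1,\lambda_2)$, satisfying one of the following: (i) $\lambda_2\neq 0$ and $\omega=0$; (ii) $\lambda_2=0$, $\lambda_1\neq 0$ and $\omega\in \mathbb R X_2\oplus\mathbb R Y_2$; (iii) $\lambda_1=\lambda_2=0$ and $\omega\in\mathfrak v$ arbitrary.
   Context: $\mathfrak n$ is the real Lie algebra with basis $X_1,Y_1,X_2,Y_2,T_1,T_2$ whose only nonzero brackets (up to skew-symmetry) are $[X_1,Y_1]=T_1$, $[X_1,X_2]=T_2$, $[Y_1,Y_2]=T_2$. Write $\mathfrak v=\mathbb R X_1\oplus\mathbb R Y_1\oplus\mathbb R X_2\oplus\mathbb R Y_2$ and $\mathfrak z=\mathbb R T_1\oplus\mathbb R T_2$ (the centre), each with the scalar product making the given basis orthonormal. Every $\ell\in\mathfrak n^*$ is written $\ell=(\omega,\lambda)$ where $\omega$ and $\lambda$ are the restrictions of $\ell$ to $\mathfrak v$ and $\mathfrak z$, identified with vectors $\omega\in\mathfrak v$ and $\lambda=\lambda_1T_1+\lambda_2T_2\in\mathfrak z$ via these scalar products. *)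

From Stdlib Require Import Reals.
Open Scope R_scope.

(* Elements of n (coordinates in the basis X1,Y1,X2,Y2,T1,T2), and also of n^*
   (coordinates in the dual basis, i.e. l = (omega, lambda) with
   omega = (vX1,vY1,vX2,vY2), lambda = (vT1,vT2)). *)
Record vec6 := mk6 { cX1 : R; cY1 : R; cX2 : R; cY2 : R; cT1 : R; cT2 : R }.

Definition vadd (x y : vec6) : vec6 :=
  mk6 (cX1 x + cX1 y) (cY1 x + cY1 y) (cX2 x + cX2 y) (cY2 x + cY2 y)
      (cT1 x + cT1 y) (cT2 x + cT2 y).
Definition vscale (a : R) (x : vec6) : vec6 :=
  mk6 (a * cX1 x) (a * cY1 x) (a * cX2 x) (a * cY2 x) (a * cT1 x) (a * cT2 x).
Definition vopp (x : vec6) : vec6 := vscale (-1) x.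

(* Lie bracket: [X1,Y1]=T1, [X1,X2]=T2, [Y1,Y2]=T2, all others zero. *)
Definition bracket (x y : vec6) : vec6 :=
  mk6 0 0 0 0
      (cX1 x * cY1 y - cY1 x * cX1 y)
      (cX1 x * cX2 y - cX2 x * cX1 y + cY1 x * cY2 y - cY2 x * cY1 y).

(* The connected simply connected group N, realised (via exp) on the
   underlying space of n with the Baker-Campbell-Hausdorff product,
   which for a 2-step nilpotent algebra is x*y = x + y + 1/2 [x,y]. *)
Definition gmul (g h : vec6) : vec6 := vadd (vadd g h) (vscale (1/2) (bracket g h)).
Definition ginv (g : vec6) : vec6 := vopp g.

(* In this exponential model the
   conjugation map Y |-> g Y g^{-1} is already linear, so it coincides with its
   differential at the identity, i.e. with Ad(g). *)
Definition Ad (g Y : vec6) : vec6 := gmul (gmul g Y) (ginv g).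

Definition pair (l x : vec6) : R :=
  cX1 l * cX1 x + cY1 l * cY1 x + cX2 l * cX2 x + cY2 l * cY2 x
  + cT1 l * cT1 x + cT2 l * cT2 x.

Definition eX1 := mk6 1 0 0 0 0 0.
Definition eY1 := mk6 0 1 0 0 0 0.
Definition eX2 := mk6 0 0 1 0 0 0.
Definition eY2 := mk6 0 0 0 1 0 0.
Definition eT1 := mk6 0 0 0 0 1 0.
Definition eT2 := mk6 0 0 0 0 0 1.

Definition coad (g l : vec6) : vec6 :=
  let f := fun Y => pair l (Ad (ginv g) Y) in
  mk6 (f eX1) (f eY1) (f eX2) (f eY2) (f eT1) (f eT2).

Definition in_orbit (l m : vec6) : Prop := exists g : vec6, m = coad g l.

Definition normal_form (l : vec6) : Prop :=
  (cT2 l <> 0 /\ cX1 l = 0 /\ cY1 l = 0 /\ cX2 l = 0 /\ cY2 l = 0)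
  \/ (cT2 l = 0 /\ cT1 l <> 0 /\ cX1 l = 0 /\ cY1 l = 0)
  \/ (cT1 l = 0 /\ cT2 l = 0).

(* Conjugation by [g = (a,b,c,d,e,f)] only shears the centre coordinates, so the
   co-adjoint action fixes [lambda] and translates [omega] by
   [(b t1 + c t2, -a t1 + d t2, -a t2, -b t2)].  When [lambda2 <> 0] these
   translations fill all of [v], when [lambda2 = 0 <> lambda1] they fill
   exactly [R X1 + R Y1], and when [lambda = 0] the orbit is a point; the
   normal forms pick the representative with the translated coordinates
   set to zero. *)

From Stdlib Require Import Reals.
Open Scope R_scope.

Lemma Ad_mk6 a b c d e f y1 y2 y3 y4 y5 y6 :
  Ad (mk6 a b c d e f) (mk6 y1 y2 y3 y4 y5 y6) =
  mk6 y1 y2 y3 y4 (y5 + (a * y2 - b * y1)) (y6 + (a * y3 - c * y1 + b * y4 - d * y2)).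
Proof.
  unfold Ad, gmul, ginv, vopp, vscale, vadd, bracket; cbn [cX1 cY1 cX2 cY2 cT1 cT2].
  f_equal; field.
Qed.

Lemma coad_mk6 a b c d e f x1 y1 x2 y2 t1 t2 :
  coad (mk6 a b c d e f) (mk6 x1 y1 x2 y2 t1 t2) =
  mk6 (x1 + b * t1 + c * t2) (y1 - a * t1 + d * t2) (x2 - a * t2) (y2 - b * t2) t1 t2.
Proof.
  unfold coad, ginv, vopp, vscale, eX1, eY1, eX2, eY2, eT1, eT2;
    cbn [cX1 cY1 cX2 cY2 cT1 cT2].
  rewrite !Ad_mk6; unfold pair; cbn [cX1 cY1 cX2 cY2 cT1 cT2].
  f_equal; ring.
Qed.

Definition normal_rep (l : vec6) : vec6 :=
  match l with
  | mk6 x1 y1 x2 y2 t1 t2 =>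
      if Req_EM_T t2 0 then
        if Req_EM_T t1 0 then l else mk6 0 0 x2 y2 t1 t2
      else mk6 0 0 0 0 t1 t2
  end.

Lemma normal_form_normal_rep (l : vec6) : normal_form (normal_rep l).
Proof.
  destruct l as [x1 y1 x2 y2 t1 t2]; unfold normal_rep, normal_form.
  destruct (Req_EM_T t2 0) as [Ht2 | Ht2]; [destruct (Req_EM_T t1 0) as [Ht1 | Ht1] |];
    cbn [cX1 cY1 cX2 cY2 cT1 cT2]; tauto.
Qed.

Lemma in_orbit_normal_rep (l : vec6) : in_orbit l (normal_rep l).
Proof.
  destruct l as [x1 y1 x2 y2 t1 t2]; unfold in_orbit, normal_rep.
  destruct (Req_EM_T t2 0) as [Ht2 | Ht2]; [destruct (Req_EM_T t1 0) as [Ht1 | Ht1] |].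
  - exists (mk6 0 0 0 0 0 0); rewrite coad_mk6; f_equal; ring.
  - exists (mk6 (y1 / t1) (- x1 / t1) 0 0 0 0); rewrite coad_mk6, Ht2.
    f_equal; field; assumption.
  - exists (mk6 (x2 / t2) (y2 / t2) (- (x1 + y2 / t2 * t1) / t2)
             (- (y1 - x2 / t2 * t1) / t2) 0 0).
    rewrite coad_mk6; f_equal; field; assumption.
Qed.

(* The normal form of an orbit element is forced, since the coordinates it
   fixes are orbit invariants in each case. *)
Lemma normal_form_coad (g l : vec6) :
  normal_form (coad g l) -> coad g l = normal_rep l.
Proof.
  destruct g as [a b c d e f], l as [x1 y1 x2 y2 t1 t2].
  rewrite coad_mk6; unfold normal_form, normal_rep; cbn [cX1 cY1 cX2 cY2 cT1 cT2].
  destruct (Req_EM_T t2 0) as [Ht2 | Ht2]; [destruct (Req_EM_T t1 0) as [Ht1 | Ht1] |];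
    intros Hnf.
  - subst; f_equal; ring.
  - destruct Hnf as [[Ht2' _] | [[_ [_ [Hx1 Hy1]]] | [Ht1' _]]]; try contradiction.
    rewrite Hx1, Hy1, Ht2; f_equal; ring.
  - destruct Hnf as [[_ [Hx1 [Hy1 [Hx2 Hy2]]]] | [[Ht2' _] | [_ Ht2']]]; try contradiction.
    rewrite Hx1, Hy1, Hx2, Hy2; reflexivity.
Qed.

Theorem lemma3p1 :
  forall l : vec6, exists! m : vec6, in_orbit l m /\ normal_form m.
Proof.
  intros l; exists (normal_rep l); split.
  - split; [apply in_orbit_normal_rep | apply normal_form_normal_rep].
  - intros m [[g ->] Hnf]; symmetry; exact (normal_form_coad g l Hnf).
Qed.
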